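(* Let $(v_0,V,E,\pi)$ be an oriented F-graph that is acyclic and independent, with $\pi:E\to\mathbb{R}_{>0}$. Define $\mathrm{Out}:V\to\mathbb{R}_{\ge0}$ by the recurrence $$\mathrm{Out}(s)=\mathbf{1}_{s=v_0}+\sum_{\substack{e'\in E\\ s\in\mathbf{h}(e')}}\pi(e')\,\mathrm{Out}(t(e'))\prod_{\substack{s'\in\mathbf{h}(e')\\ s'\neq s}}W(s').$$ Then for every arc $e\in E$, $$\sum_{\substack{p\in\mathcal{P}(v_0)\\ e\in p}}\pi(p)=\mathrm{Out}(t(e))\cdot\pi(e)\cdot\prod_{s'\in\mathbf{h}(e)}W(s'),$$ and consequently the probability that a random F-path $p\in\mathcal{P}(v_0)$, drawn with probability $\pi(p)/W(v_0)$, uses the arc $e$ equals $$p_e=\frac{\mathrm{Out}(t(e))\cdot\pi(e)\cdot\prod_{s'\in\mathbf{h}(e)}W(s')}{W(v_0)}.$$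
   Context: An F-graph is a pair $(V,E)$ where $V$ is a finite set of vertices and $E$ is a finite set of F-arcs; an F-arc $e=(t(e)\to\mathbf{h}(e))$ has a single tail vertex $t(e)\in V$ and a head $\mathbf{h}(e)=(t_1,\dots,t_r)$, a finite (possibly empty) ordered list of vertices. The F-paths from $s\in V$ are defined recursively: for any arc $e=(s\to(t_1,\dots,t_r))\in E$ and any F-paths $p_1,\dots,p_r$ from $t_1,\dots,t_r$, the tree $\langle e;p_1,\dots,p_r\rangle$ is an F-path from $s$ (a leaf if $r=0$). $\mathcal{P}(s)$ is the set of F-paths from $s$; ''$e\in p$'' means that $e$ is the arc used at some node of $p$. The F-graph is acyclic if the directed graph on $V$ with an edge $s\to u$ whenever $u$ occurs in the head of an arc with tail $s$ has no directed cycle; it is independent if in every F-path (from any root) each vertex of $V$ labels at most one node. An oriented F-graph $(v_0,V,E,\pi)$ is a weighted independent F-graph with a distinguished initial vertex $v_0\in V$. The weight of an F-path is $\pi(p)=\prod_{\text{nodes }x}\pi(e_x)$, $e_x$ being the arc used at node $x$, and $W(s)=\sum_{p\in\mathcal{P}(s)}\pi(p)$ (empty sum $0$, empty product $1$); $\mathbf{1}_{s=v_0}$ is $1$ if $s=v_0$ and $0$ otherwise. *)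

From HB Require Import structures.
From mathcomp Require Import all_boot all_order all_algebra.
From Stdlib Require List.
Set Implicit Arguments. Unset Strict Implicit. Unset Printing Implicit Defensive.
Import Order.TTheory GRing.Theory Num.Theory.

(* An F-graph: vertex finType V, arc finType E, each arc e has a tail
   [tl e : V] and an ordered (possibly empty) head [hd e : seq V]. *)

(* F-path trees: a node carries the arc used at that node and the list of
   subtrees, one for each head vertex. *)
Inductive ftree (E : Type) : Type :=
  | FNode : E -> seq (ftree E) -> ftree E.
Arguments FNode {E}.

Definition fp_arc (E : Type) (p : ftree E) : E := let: FNode e _ := p in e.

Section FGraph.
Variables (V E : finType) (tl : E -> V) (hd : E -> seq V).

Definition fp_root (p : ftree E) : V := tl (fp_arc p).

Fixpoint fp_wf (p : ftree E) : bool :=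
  let: FNode e ps := p in
  (map fp_root ps == hd e) &&
  (fix aux (l : seq (ftree E)) : bool :=
     match l with [::] => true | q :: l' => fp_wf q && aux l' end) ps.

Definition is_fpath (s : V) (p : ftree E) : bool := fp_wf p && (fp_root p == s).

Fixpoint fp_arcs (p : ftree E) : seq E :=
  let: FNode e ps := p in
  e :: (fix aux (l : seq (ftree E)) : seq E :=
          match l with [::] => [::] | q :: l' => fp_arcs q ++ aux l' end) ps.

Definition fsucc : rel V := fun s u => [exists e, (tl e == s) && (u \in hd e)].

Definition f_acyclic : Prop := forall s u, fsucc s u -> ~~ connect fsucc u s.

Definition f_independent : Prop :=
  forall s p, is_fpath s p -> uniq (map tl (fp_arcs p)).

Variable R : numDomainType.
Variable pi : E -> R.

Local Open Scope ring_scope.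

Definition fp_weight (p : ftree E) : R := \prod_(a <- fp_arcs p) pi a.

(* [L] enumerates P(s) : a duplicate-free list whose members are exactly the
   F-paths from s (P(s) is finite for acyclic F-graphs). *)
Definition enumerates_paths (L : V -> seq (ftree E)) : Prop :=
  forall s, List.NoDup (L s) /\ (forall p, List.In p (L s) <-> is_fpath s p).

Definition Wsum (L : V -> seq (ftree E)) (s : V) : R :=
  \sum_(p <- L s) fp_weight p.

End FGraph.

From HB Require Import structures.
From mathcomp Require Import all_boot all_order all_algebra ring.
From Stdlib Require List.
Import Order.TTheory GRing.Theory Num.Theory.

(* Fix an arc e and write G(s) for the total weight of the F-paths from s,
   each counted with the number of its nodes that use e.  Splitting an F-path
   at its root arc f and expanding the product over the subtrees gives, by the
   Leibniz rule for the derivative of a product,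
     G(s) = sum_(f | tl f = s) pi f * ([f = e] prod_(h in hd f) W h
                                      + sum_(s' in hd f) G s' prod_(s'' <> s') W s'').
   The regrouping by distinct head vertices is legitimate because, by
   independence, a head list with a repeated vertex must contain a vertex
   with no F-path at all (where G = W = 0).  Pairing this equation with an
   arbitrary F : V -> R, and the recurrence defining Out with G, computes
   sum_s Out s * G s in two ways; the common double sum cancels and leaves
   G(v0) = Out(tl e) pi e prod_(h in hd e) W h.  By independence every
   F-path uses e at most once, so G(v0) is the weight of the paths through e. *)

Local Open Scope ring_scope.

Section FTreeEq.
Variable E : eqType.

Fixpoint ft_eqb (p q : ftree E) : bool :=
  let: FNode e ps := p in let: FNode f qs := q in
  (e == f) &&
  (fix aux (l1 l2 : seq (ftree E)) : bool :=
     match l1, l2 with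
     | [::], [::] => true
     | a :: l1', b :: l2' => ft_eqb a b && aux l1' l2'
     | _, _ => false end) ps qs.

Fixpoint ftree_ind_in (P : ftree E -> Prop)
  (H : forall e ps, (forall q, List.In q ps -> P q) -> P (FNode e ps)) p : P p :=
  let: FNode e ps := p in
  H e ps ((fix aux (l : seq (ftree E)) : forall q, List.In q l -> P q :=
    match l with
    | [::] => fun q (hq : List.In q [::]) => False_ind _ hq
    | a :: l' => fun q hq => match hq with
                 | or_introl h => eq_ind a P (ftree_ind_in P H a) q h
                 | or_intror h => aux l' q h end end) ps).

Lemma ft_eqP : Equality.axiom ft_eqb.
Proof.
move=> p q; apply: (iffP idP) => [|<-].
  elim/ftree_ind_in: p q => e ps IH [f qs] /= /andP[/eqP <- h]; congr FNode.
  elim: ps qs IH h => [|a ps IHl] [|b qs] //= IH /andP[hab hr].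
  congr (_ :: _); first exact: (IH a (or_introl erefl)).
  by apply: IHl => // r hr'; apply: IH; right.
elim/ftree_ind_in: p => e ps IH /=; rewrite eqxx /=.
elim: ps IH => [|a ps IHl] //= IH.
by rewrite (IH a (or_introl erefl)) IHl // => r hr; apply: IH; right.
Qed.

End FTreeEq.

HB.instance Definition _ (E : eqType) := hasDecEq.Build (ftree E) (@ft_eqP E).

(* The enumeration hypothesis is phrased with [List.In] and [List.NoDup]. *)
Lemma In_mem (T : eqType) (x : T) s : List.In x s <-> x \in s.
Proof.
elim: s => [|y s IH] //=; rewrite in_cons; split.
  by case=> [->|/IH->]; rewrite ?eqxx ?orbT.
by case/orP => [/eqP->|/IH]; [left|right].
Qed.

Lemma NoDup_uniq (T : eqType) (s : seq T) : List.NoDup s -> uniq s.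
Proof.
elim: s => //= x s IH H; inversion H; subst.
by rewrite IH // andbT; apply/negP => /In_mem.
Qed.

Section Leibniz.
Variables (R : comNzRingType) (V : Type) (G W : V -> R).

(* [leibniz G W l] = sum over positions i of G (l_i) * prod_(j <> i) W (l_j):
   the derivative of prod_(h <- l) W h in the direction G. *)
Fixpoint leibniz (l : seq V) : R :=
  if l is h :: t then G h * \prod_(h' <- t) W h' + W h * leibniz t else 0.

End Leibniz.
Arguments leibniz {R V}.

Section LeibnizDistinct.
Context {R : comNzRingType} {V : eqType} {G W : V -> R}.

Lemma prod_other_cons (h : V) t :
  h \notin t -> \prod_(s' <- h :: t | s' != h) W s' = \prod_(s' <- t) W s'.
Proof.
move=> ht; rewrite big_cons eqxx big_seq_cond [RHS]big_seq.
by apply: eq_bigl => x; case: (boolP (x \in t)) => //= xt; apply: contraNneq ht => <-.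
Qed.

Lemma leibniz_uniq l : uniq l ->
  leibniz G W l = \sum_(s <- l) G s * \prod_(s' <- l | s' != s) W s'.
Proof.
elim: l => [|h t IH] /=; first by rewrite big_nil.
case/andP=> ht /IH ->; rewrite big_cons prod_other_cons // mulr_sumr.
congr (_ + _); rewrite !big_seq; apply: eq_bigr => s st.
have hs : h != s by apply: contraNneq ht => ->.
by rewrite big_cons hs; ring.
Qed.

Lemma prod_other_eq0 {l h s} : h \in l -> h != s -> W h = 0 ->
  \prod_(s' <- l | s' != s) W s' = 0.
Proof. by move=> hl hs Wh; rewrite (big_rem h) //= hs Wh mul0r. Qed.

Lemma leibniz_eq0 {l h} : h \in l -> G h = 0 -> W h = 0 -> leibniz G W l = 0.
Proof.
move=> + Gh Wh; elim: l => [|a t IH] //=; rewrite in_cons.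
case: eqP => [<- _|_ /= ht]; first by rewrite Gh Wh !mul0r addr0.
by rewrite IH // mulr0 addr0 (big_rem h) //= Wh mul0r mulr0.
Qed.

End LeibnizDistinct.

Lemma leibniz_distinct (R : comNzRingType) (V : finType) (G W : V -> R) l :
  uniq l \/ (exists2 h, h \in l & G h = 0 /\ W h = 0) ->
  leibniz G W l = \sum_(s in l) G s * \prod_(s' <- l | s' != s) W s'.
Proof.
case=> [ul | [h hl [Gh Wh]]]; first by rewrite leibniz_uniq // big_uniq.
rewrite (leibniz_eq0 hl Gh Wh) big1 // => s _.
case: (eqVneq h s) => [<-|hs]; first by rewrite Gh mul0r.
by rewrite (prod_other_eq0 hl hs Wh) mulr0.
Qed.

Fixpoint combs {T : Type} (ls : seq (seq T)) : seq (seq T) :=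
  if ls is l :: ls' then [seq x :: c | x <- l, c <- combs ls'] else [:: [::]].

Lemma combs_prod (R : comNzRingType) T (w : T -> R) ls :
  \sum_(c <- combs ls) \prod_(q <- c) w q = \prod_(l <- ls) \sum_(q <- l) w q.
Proof.
elim: ls => [|l ls IH] /=; first by rewrite big_seq1 !big_nil.
rewrite big_allpairs_dep /= big_cons mulr_suml; apply: eq_bigr => x _.
by rewrite -IH mulr_sumr; apply: eq_bigr => c _; rewrite big_cons.
Qed.

Lemma combs_leibniz (R : comNzRingType) (V T : Type) (LL : V -> seq T)
    (g w : T -> R) hs :
  \sum_(c <- combs (map LL hs)) (\sum_(q <- c) g q) * \prod_(q <- c) w q =
  leibniz (fun h => \sum_(q <- LL h) g q * w q) (fun h => \sum_(q <- LL h) w q) hs.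
Proof.
elim: hs => [|h hs IH] /=; first by rewrite big_seq1 big_nil mul0r.
rewrite big_allpairs_dep /= -IH.
rewrite -(big_map LL xpredT (fun l => \sum_(q <- l) w q)) -combs_prod.
rewrite mulr_suml mulr_suml -big_split /=; apply: eq_bigr => x _.
rewrite !mulr_sumr -big_split /=; apply: eq_bigr => c _; rewrite !big_cons; ring.
Qed.

Lemma uniq_combs (T : eqType) (ls : seq (seq T)) : all uniq ls -> uniq (combs ls).
Proof.
elim: ls => [|l ls IH] //= /andP[ul uls]; apply: allpairs_uniq => //; first exact: IH.
by move=> [x1 y1] [x2 y2] _ _ /= [-> ->].
Qed.

Section Paths.
Variables (R : numDomainType) (V E : finType) (tl : E -> V) (hd : E -> seq V)
  (pi : E -> R) (L : V -> seq (ftree E)).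
Hypothesis indep : f_independent tl hd.
Hypothesis enumL : enumerates_paths tl hd L.

Lemma memL s p : (p \in L s) = is_fpath tl hd s p.
Proof.
by apply/idP/idP => [/In_mem/(proj2 (enumL s) p)|/(proj2 (enumL s) p)/In_mem].
Qed.

Lemma uniqL s : uniq (L s).
Proof. exact: NoDup_uniq (proj1 (enumL s)). Qed.

Lemma fp_wfE f c : fp_wf tl hd (FNode f c) =
  (map (fp_root tl) c == hd f) && all (fp_wf tl hd) c.
Proof. by rewrite /=; congr andb; elim: c => //= q c ->. Qed.

Lemma fp_arcsE f c : fp_arcs (FNode f c) = f :: flatten (map (@fp_arcs E) c).
Proof. by rewrite /=; congr cons; elim: c => //= q c ->. Qed.

Lemma fp_weightE f c :
  fp_weight pi (FNode f c) = pi f * \prod_(q <- c) fp_weight pi q.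
Proof. by rewrite /fp_weight fp_arcsE big_cons big_flatten big_map. Qed.

Lemma mem_combs hs c : (c \in combs (map L hs)) =
  (map (fp_root tl) c == hs) && all (fp_wf tl hd) c.
Proof.
elim: hs c => [|h hs IH] [|q c] /=; rewrite ?inE //.
  by apply/allpairsP => -[[x y] [_ _]].
apply/allpairsP/idP => [[[x y] [/= hx hy [-> ->]]]|].
  by move: hx hy; rewrite memL IH /is_fpath eqseq_cons => /andP[-> ->] /andP[-> ->].
rewrite eqseq_cons => /andP[/andP[h1 h2] /andP[h3 h4]]; exists (q, c); split => //=.
  by rewrite memL /is_fpath h3 h1.
by rewrite IH h2 h4.
Qed.

Lemma sum_paths_by_arc (F : ftree E -> R) s : \sum_(p <- L s) F p =
  \sum_(f | tl f == s) \sum_(c <- combs (map L (hd f))) F (FNode f c).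
Proof.
transitivity (\sum_(p <- L s) \sum_(f : E) (if f == fp_arc p then F p else 0)).
  by apply: eq_bigr => p _; rewrite -big_mkcond big_pred1_eq.
rewrite exchange_big /= [RHS]big_mkcond; apply: eq_bigr => f _; rewrite -big_mkcond /=.
case: ifP => hf.
  rewrite -big_filter -(big_map (FNode f) xpredT F); apply: perm_big.
  apply: uniq_perm.
  - by rewrite filter_uniq // uniqL.
  - rewrite map_inj_uniq; last by move=> x y [].
    by apply: uniq_combs; apply/allP => l /mapP[h _ ->]; apply: uniqL.
  move=> [g c]; rewrite mem_filter memL /is_fpath fp_wfE /=.
  case: (eqVneq f g) => [<-|ne] /=.
    by rewrite mem_map ?mem_combs /fp_root /= ?hf ?andbT // => x y [].
  by apply/esym/mapP => -[y _ [eq _]]; move: ne; rewrite eq eqxx.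
apply: big1_seq => p /andP[/eqP fe]; rewrite memL /is_fpath => /andP[_].
by case: p fe => g c /= <- /eqP; rewrite /fp_root /= => tfs; rewrite tfs eqxx in hf.
Qed.

(* The roots of the children of a node are among its vertex labels. *)
Lemma roots_uniq f c :
  uniq (map tl (fp_arcs (FNode f c))) -> uniq (map (fp_root tl) c).
Proof.
rewrite fp_arcsE /= => /andP[_]; apply: subseq_uniq.
rewrite [map (fp_root tl) c](map_comp tl (@fp_arc E)); apply: map_subseq.
elim: c => //= -[g ps] c IH.
by rewrite fp_arcsE /= eqxx; apply: subseq_trans IH _; exact: suffix_subseq.
Qed.

(* Independence forces the head of an arc to be duplicate-free, unless some
   head vertex has no F-path: otherwise picking one F-path per head vertex
   builds an F-path labelling a repeated vertex twice. *)
Lemma hd_uniq_or_dead f : uniq (hd f) \/ exists2 h, h \in hd f & L h = [::].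
Proof.
have [/hasP[h hh /eqP Lh]|/hasPn alive] := boolP (has (fun h => L h == [::]) (hd f)).
  by right; exists h.
left; pose c := map (fun h => head (FNode f [::]) (L h)) (hd f).
have hc h : h \in hd f -> head (FNode f [::]) (L h) \in L h.
  by move/alive; case: (L h) => //= x l _; rewrite mem_head.
have roots : map (fp_root tl) c = hd f.
  rewrite -map_comp -[RHS]map_id; apply/eq_in_map => h /hc.
  by rewrite memL => /andP[_ /eqP].
rewrite -roots; apply: (@roots_uniq f); apply: (indep (tl f)).
rewrite /is_fpath fp_wfE /fp_root /= eqxx andbT roots eqxx /=.
by apply/allP => q /mapP[h /hc]; rewrite memL => /andP[? _] ->.
Qed.

Section ArcCount.
Variable e : E.
Local Notation W := (Wsum pi L).

Definition count_e (p : ftree E) : R := (count_mem e (fp_arcs p))%:R.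

Definition Ge (s : V) : R := \sum_(p <- L s) count_e p * fp_weight pi p.

Lemma count_eE f c : count_e (FNode f c) = (f == e)%:R + \sum_(q <- c) count_e q.
Proof.
rewrite /count_e fp_arcsE /= count_flatten natrD sumnE natr_sum.
by rewrite !big_map.
Qed.

Lemma Ge_rec s : Ge s = \sum_(f | tl f == s) pi f *
  ((f == e)%:R * \prod_(h <- hd f) W h
   + \sum_(s' in hd f) Ge s' * \prod_(s'' <- hd f | s'' != s') W s'').
Proof.
rewrite /Ge sum_paths_by_arc; apply: eq_bigr => f _.
have dist : leibniz Ge W (hd f) =
    \sum_(s' in hd f) Ge s' * \prod_(s'' <- hd f | s'' != s') W s''.
  apply: leibniz_distinct; case: (hd_uniq_or_dead f) => [|[h hh Lh]]; first by left.
  by right; exists h => //; rewrite /Ge /Wsum Lh !big_nil.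
rewrite -dist /Ge /Wsum -combs_leibniz -(big_map L xpredT (fun l => \sum_(q <- l) _)).
rewrite -combs_prod !mulr_sumr -big_split /= mulr_sumr.
by apply: eq_bigr => c _; rewrite count_eE fp_weightE; ring.
Qed.

(* By independence, e is used at most once, so G is the weight of the
   F-paths through e. *)
Lemma sum_paths_through_e s :
  \sum_(p <- L s | e \in fp_arcs p) fp_weight pi p = Ge s.
Proof.
rewrite big_mkcond /Ge !big_seq; apply: eq_bigr => p pL.
have /map_uniq up : uniq (map tl (fp_arcs p)) by apply: (indep s); rewrite -memL.
by rewrite /count_e count_uniq_mem //; case: (e \in fp_arcs p); rewrite ?mul1r ?mul0r.
Qed.

Lemma pair_with_Ge (F : V -> R) : \sum_s F s * Ge s =
  F (tl e) * pi e * \prod_(h <- hd e) W h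
  + \sum_f F (tl f) * pi f * \sum_(s in hd f) Ge s * \prod_(s' <- hd f | s' != s) W s'.
Proof.
under [LHS]eq_bigr => s _ do rewrite Ge_rec mulr_sumr.
rewrite (exchange_big_dep xpredT) //=.
under [LHS]eq_bigr => f _ do rewrite (big_pred1 (tl f)) 1?eq_sym //.
rewrite (bigD1 e) //= [in RHS](bigD1 e) //= eqxx mul1r addrA; congr (_ + _); first ring.
by apply: eq_bigr => f fe; rewrite eq_sym (negbTE fe) mul0r add0r mulrA.
Qed.

(* The recurrence for Out pairs with G to the same double sum, which
   cancels. *)
Lemma arc_weight_sum (v0 : V) (Out : V -> R) :
  (forall s, Out s = (s == v0)%:R + \sum_(e' : E | s \in hd e')
     pi e' * Out (tl e') * \prod_(s' <- hd e' | s' != s) W s') ->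
  \sum_(p <- L v0 | e \in fp_arcs p) fp_weight pi p
    = Out (tl e) * pi e * \prod_(s' <- hd e) W s'.
Proof.
move=> Out_rec; rewrite sum_paths_through_e; have := pair_with_Ge Out.
have -> : \sum_s Out s * Ge s = Ge v0 +
    \sum_f Out (tl f) * pi f * \sum_(s in hd f) Ge s * \prod_(s' <- hd f | s' != s) W s'.
  under eq_bigr => s _ do rewrite Out_rec mulrDl mulr_suml.
  rewrite big_split /=; congr (_ + _).
    by rewrite (bigD1 v0) //= eqxx mul1r big1 ?addr0 // => s /negbTE ->; rewrite mul0r.
  rewrite (exchange_big_dep xpredT) //=; apply: eq_bigr => f _.
  by rewrite mulr_sumr; apply: eq_bigr => s _; ring.
by move/addIr.
Qed.
End ArcCount.
End Paths.

Theorem mainTheorem5 (R : realFieldType) (V E : finType)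
    (tl : E -> V) (hd : E -> seq V) (pi : E -> R) (v0 : V)
    (L : V -> seq (ftree E)) (Out : V -> R) :
  f_acyclic tl hd ->
  f_independent tl hd ->
  (forall e, 0 < pi e) ->
  enumerates_paths tl hd L ->
  (forall s, Out s =
     (s == v0)%:R +
     \sum_(e' : E | s \in hd e')
        pi e' * Out (tl e') *
        \prod_(s' <- hd e' | s' != s) Wsum pi L s') ->
  forall e : E,
    \sum_(p <- L v0 | e \in fp_arcs p) fp_weight pi p
      = Out (tl e) * pi e * \prod_(s' <- hd e) Wsum pi L s'
  /\ (\sum_(p <- L v0 | e \in fp_arcs p) fp_weight pi p) / Wsum pi L v0
      = Out (tl e) * pi e * \prod_(s' <- hd e) Wsum pi L s' / Wsum pi L v0.
Proof.
move=> _ indep _ enumL Out_rec e.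
have through_e := @arc_weight_sum R V E tl hd pi L indep enumL e v0 Out Out_rec.
by split; rewrite through_e.
Qed.
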